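(* Let $T$ be a nontrivial finite $2$-group and $H$ a finite group of odd order such that $d(T\times H)=3$. Then $\mathsf{GEN}(T\times H)=*0$.
   Context: For a finite group $G$, $\mathsf{GEN}(G)$ is the following impartial two-player game. A position is a set of elements selected so far; the starting position is $\emptyset$. From a position $P$ with $\langle P\rangle\neq G$, the player to move selects some $g\in G\setminus P$, producing the position $P\cup\{g\}$ (these are the options of $P$); a position $P$ with $\langle P\rangle = G$ has no options. The nim-number of a position is defined recursively by $\operatorname{nim}(P)=\operatorname{mex}\{\operatorname{nim}(Q): Q \text{ an option of } P\}$, where $\operatorname{mex}(A)$ is the least nonnegative integer not in $A$. We write $\mathsf{GEN}(G)=*n$ if $\operatorname{nim}(\emptyset)=n$. $d(G)$ denotes the minimum size of a generating set of $G$. *)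

From HB Require Import structures.
From mathcomp Require Import all_boot all_fingroup all_solvable.
Set Implicit Arguments. Unset Strict Implicit. Unset Printing Implicit Defensive.
Import GroupScope.

(* mex of a finite list of naturals: least n not in s (always <= size s). *)
Definition mex (s : seq nat) : nat :=
  find (fun n => n \notin s) (iota 0 (size s).+1).

Section Gen.
Variable gT : finGroupType.
Implicit Types (G : {group gT}) (P : {set gT}).

(* Positions P with <<P>> = G are terminal; otherwise the options are
   P :|: [set g] for g in G :\: P.  Every play has length <= #|G|,
   so fuel #|G|.+1 suffices for the empty position. *)
Fixpoint nim_fuel G (k : nat) P : nat :=
  match k with
  | 0 => 0
  | k'.+1 =>
      if <<P>> == (G : {set gT}) then 0
      else mex [seq nim_fuel G k' (g |: P) | g <- enum (G :\: P)]
  end.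

Definition GEN G : nat := nim_fuel G #|G|.+1 set0.

Lemma dgen_ex G :
  exists n, [exists A : {set gT}, [&& A \subset G, <<A>> == G & #|A| == n]].
Proof.
exists #|G|; apply/existsP; exists (G : {set gT}).
by rewrite subxx genGid !eqxx.
Qed.

Definition dgen G : nat := ex_minn (dgen_ex G).
End Gen.

(* The second player wins by a pairing strategy.  T x H has a central
   involution t, so every g lies, together with g * x for some involution x,
   in a cyclic subgroup <[z]>: take x = t and z = g * t when #[g] is odd, and
   x = g ^+ (#[g] / 2), z = g otherwise.  After the first move g the second
   player answers g * x.  From then on the position is closed under right
   multiplication by x, and since {h, g, g * x} lies in <<[set h; z]>>, no
   single move can generate a group with d(G) = 3.  The second player keeps
   answering each move y by y * x, which preserves both properties, unless y
   leaves a generating move, which she then plays; either way she moves last. *)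

From mathcomp Require Import all_boot all_fingroup all_solvable.
Set Implicit Arguments. Unset Strict Implicit. Unset Printing Implicit Defensive.
Import GroupScope.

Lemma mex_eq0 (s : seq nat) : 0 \notin s -> mex s = 0.
Proof. by rewrite /mex /= => ->. Qed.

Lemma mex_neq0 (s : seq nat) : 0 \in s -> mex s != 0.
Proof. by rewrite /mex /= => ->. Qed.

Lemma genU1_id (gT : finGroupType) (a : gT) (A : {set gT}) :
  a \in <<A>> -> <<a |: A>> = <<A>>.
Proof.
move=> aA; apply/eqP; rewrite eqEsubset gen_subG subUset sub1set aA subset_gen.
exact/genS/subsetUr.
Qed.

Lemma cardsDU1 (T : finType) (A B : {set T}) a :
  a \in A :\: B -> #|A :\: B| = #|A :\: (a |: B)|.+1.
Proof. by move=> aAB; rewrite (cardsD1 a) aAB setDDl setUC. Qed.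

Lemma gen_neq_lt_dgen (gT : finGroupType) (G : {group gT}) (A : {set gT}) :
  A \subset G -> #|A| < dgen G -> <<A>> != G.
Proof.
move=> sAG ltAd; apply/eqP=> genA.
have exA : [exists B : {set gT}, [&& B \subset G, <<B>> == G & #|B| == #|A|]].
  by apply/existsP; exists A; rewrite sAG genA !eqxx.
by move: ltAd; rewrite /dgen; case: ex_minnP => m _ /(_ _ exA); rewrite leqNgt => /negP.
Qed.

Lemma order2_mulgg (gT : finGroupType) (x : gT) : #[x] = 2 -> x * x = 1.
Proof. by move=> ox; rewrite -{2}[x]expg1 -expgS -ox expg_order. Qed.

Lemma order2_neq1 (gT : finGroupType) (x : gT) : #[x] = 2 -> x != 1.
Proof. by move=> ox; apply: contra_eqN ox => /eqP ->; rewrite order1. Qed.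

Section GenGame.
Variables (gT : finGroupType) (G : {group gT}).
Implicit Types (P : {set gT}).

Lemma nim_fuel_gen_eq0 k P : <<P>> = G -> nim_fuel G k P = 0.
Proof. by case: k => //= k ->; rewrite eqxx. Qed.

Lemma nim_fuel_eq0 k P : <<P>> != G ->
  {in G :\: P, forall g, nim_fuel G k (g |: P) != 0} -> nim_fuel G k.+1 P = 0.
Proof.
move=> nPG opt; rewrite /= (negbTE nPG); apply: mex_eq0.
by apply/mapP=> -[g]; rewrite mem_enum => /opt/negP nz /esym/eqP.
Qed.

Lemma nim_fuel_neq0 k P g : <<P>> != G -> g \in G :\: P ->
  nim_fuel G k (g |: P) = 0 -> nim_fuel G k.+1 P != 0.
Proof.
move=> nPG gGP nim0; rewrite /= (negbTE nPG); apply: mex_neq0.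
by apply/mapP; exists g; rewrite ?mem_enum.
Qed.

Lemma nim_fuel_closed_involution_eq0 x k P :
  x \in G -> #[x] = 2 -> P != set0 -> {in P, forall p, p * x \in P} ->
  {in G, forall h, <<h |: P>> != G} -> #|G :\: P| < k -> nim_fuel G k P = 0.
Proof.
move=> xG ox; elim/ltn_ind: k P => -[//|k] IH P /set0Pn[p pP] Px noP ltPk.
have xP : x \in <<P>>.
  by rewrite -(mulKg p x) groupM ?groupV ?mem_gen ?Px.
apply: nim_fuel_eq0 => [|g gGP].
  by have := noP 1 (group1 G); rewrite genU1_id.
have /andP[gP gG] : (g \notin P) && (g \in G) by rewrite -in_setD.
case: k IH ltPk => [|k] IH ltPk; first by rewrite (cardsDU1 gGP) in ltPk.
case: (boolP [exists h in G, <<h |: (g |: P)>> == G])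
  => [/exists_inP[h hG /eqP genh] | noQ]; last first.
- have gxQ : g * x \in G :\: (g |: P).
    rewrite !inE groupM // andbT negb_or; apply/andP; split.
      by rewrite -{2}[g]mulg1 (can_eq (mulKg g)) order2_neq1.
    by apply: contra gP => /Px; rewrite -mulgA order2_mulgg ?mulg1.
  apply: (nim_fuel_neq0 (noP g gG) gxQ); apply: IH => //.
  + by apply/set0Pn; exists (g * x); rewrite setU11.
  + move=> q /setU1P[->|/setU1P[->|qP]].
    * by rewrite -mulgA order2_mulgg // mulg1 setU1r // setU11.
    * exact: setU11.
    * by rewrite !setU1r ?Px.
  + move=> h hG; rewrite setUCA genU1_id.
      by apply: contra noQ => genh; apply/exists_inP; exists h.
    rewrite groupM ?(mem_gen (setU1r _ (setU11 _ _))) //.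
    by apply: (subsetP (genS _) _ xP); apply/subsetP=> q qP; rewrite !setU1r.
  + by rewrite (cardsDU1 gGP) (cardsDU1 gxQ) !ltnS in ltPk.
- have hQ : h \in G :\: (g |: P).
    rewrite inE hG andbT; apply: contra (noP g gG) => /mem_gen hQ.
    by rewrite -genh (genU1_id hQ).
  exact: nim_fuel_neq0 (noP g gG) hQ (nim_fuel_gen_eq0 _ _).
Qed.

End GenGame.

Lemma central_involution_cycle (gT : finGroupType) (G : {group gT}) t g :
  t \in 'Z(G) -> #[t] = 2 -> g \in G ->
  exists x z, [/\ x \in G, #[x] = 2, z \in G, g \in <[z]> & g * x \in <[z]>].
Proof.
move=> /centerP[tG ctG] ot gG.
have [odd_g | even_g] := boolP (odd #[g]).
  exists t, (g * t); split; rewrite ?cycle_id ?groupM //.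
  apply: (subsetP (cycleMsub _ _)) (cycle_id g); first exact/esym/ctG.
  by rewrite ot coprimen2.
pose m := #[g]./2.
have og : #[g] = m.*2 by rewrite -{1}(odd_double_half #[g]) (negbTE even_g).
have m_gt0 : 0 < m by rewrite -double_gt0 -og.
exists (g ^+ m), g; split; rewrite ?groupM ?groupX ?mem_cycle ?cycle_id //.
by rewrite orderXdiv og -muln2 ?dvdn_mulr // mulKn.
Qed.

Theorem GEN_eq0_central_involution (gT : finGroupType) (G : {group gT}) t :
  2 < dgen G -> t \in 'Z(G) -> #[t] = 2 -> GEN G = 0.
Proof.
move=> lt2d tZ ot.
have ngen (A : {set gT}) : A \subset G -> #|A| <= 2 -> <<A>> != G.
  by move=> sAG leA2; apply: gen_neq_lt_dgen; last exact: leq_ltn_trans lt2d.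
apply: nim_fuel_eq0 => [|g]; first by rewrite ngen ?sub0set ?cards0.
rewrite setD0 setU0 => gG.
have [x [z [xG ox zG gz gxz]]] := central_involution_cycle tZ ot gG.
have gxg : g * x \in G :\: [set g].
  by rewrite !inE groupM // andbT -{2}[g]mulg1 (can_eq (mulKg g)) order2_neq1.
rewrite -(prednK (cardG_gt0 G)).
apply: (nim_fuel_neq0 _ gxg); first by rewrite ngen ?sub1set ?cards1.
apply: (nim_fuel_closed_involution_eq0 xG ox).
- by apply/set0Pn; exists g; rewrite !inE eqxx orbT.
- move=> q /setU1P[->|/set1P->]; last exact: setU11.
  by rewrite -mulgA order2_mulgg // mulg1 setU1r ?set11.
- move=> h hG; apply: contra (ngen [set h; z] _ _) => [/eqP genh||].
  + have sz : <[z]> \subset <<[set h; z]>>.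
      by rewrite cycle_subG mem_gen // !inE eqxx orbT.
    rewrite eqEsubset gen_subG subUset !sub1set hG zG -{1}genh gen_subG.
    by rewrite !subUset !sub1set mem_gen ?setU11 // !(subsetP sz).
  + by rewrite subUset !sub1set hG zG.
  + by rewrite cards2; case: (h != z).
- by rewrite (cardsD1 g G) gG add1n (cardsDU1 gxg).
Qed.

Lemma pgroup_center_order (gT : finGroupType) (p : nat) (T : {group gT}) :
  pgroup p T -> T :!=: 1 -> exists2 t, t \in 'Z(T) & #[t] = p.
Proof.
move=> pT ntT; have ntZ : 'Z(T) != 1 by rewrite center_nil_eq1 ?(pgroup_nil pT).
have [p_pr p_dvd _] := pgroup_pdiv (pgroupS (center_sub T) pT) ntZ.
by have [t] := Cauchy p_pr p_dvd; exists t.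
Qed.

Lemma pair_center1 (aT bT : finGroupType) (T : {group aT}) (H : {group bT}) t :
  t \in 'Z(T) -> (t, 1) \in 'Z(setX T H).
Proof.
case/centerP=> tT ctT; apply/centerP; split=> [|[a b] /setXP[aT1 _]].
  by rewrite in_setX tT group1.
change ((t * a, 1 * b) = (a * t, b * 1)).
by rewrite mulg1 mul1g ctT.
Qed.

Theorem proposition4p5 (aT bT : finGroupType) (T : {group aT}) (H : {group bT}) :
  pgroup 2 T -> T :!=: 1%g -> odd #|H| ->
  dgen (setX_group T H) = 3 -> GEN (setX_group T H) = 0.
Proof.
move=> pT ntT _ dG; have [t tZ ot] := pgroup_center_order pT ntT.
apply: (GEN_eq0_central_involution (t := (t, 1))); first by rewrite dG.
  exact: pair_center1.
by rewrite (order_injm (injm_pairg1 _ bT)) ?inE.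
Qed.
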